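(* Let $l>0$ and $g>0$, and for real parameters $\Lambda_1,\Lambda_2$ let $\bar U(\theta)=\Lambda_1\cos 2\theta+\Lambda_2\sin 2\theta-gl\cos\theta$ with $l=1$, $g=1$, i.e. $\bar U(\theta)=\Lambda_1\cos 2\theta+\Lambda_2\sin 2\theta-\cos\theta$. Then $\bar U$ has a degenerate critical point, i.e. there exists $\theta\in\mathbb{R}$ with $\bar U'(\theta)=0$ and $\bar U''(\theta)=0$, if and only if $(\Lambda_1,\Lambda_2)$ lies on the curve $$\Gamma_1=\left\{\left(\tfrac{\cos^3\theta}{2}-\tfrac{3\cos\theta}{4},\ \tfrac{\sin^3\theta}{2}\right):\ \theta\in\mathbb{R}\right\}.$$
   Context: $\bar U$ is the effective potential of the averaged Hamiltonian $\bar H(\theta,p)=\frac{p^2}{2l^2}+\bar U(\theta)$ of a pendulum (rod length $l$, unit mass, gravity $g$) whose suspension point is subjected to small stochastic vibrations; here $l=g=1$. The parameters $\Lambda_1,\Lambda_2$ are arbitrary real numbers. *)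

From Stdlib Require Import Reals.
From Coquelicot Require Import Coquelicot.
Open Scope R_scope.

Definition Ubar (L1 L2 : R) (th : R) : R :=
  L1 * cos (2 * th) + L2 * sin (2 * th) - cos th.

Definition Gamma1 (L1 L2 : R) : Prop :=
  exists t : R, L1 = (cos t) ^ 3 / 2 - 3 * cos t / 4 /\ L2 = (sin t) ^ 3 / 2.

(** The conditions [U' = 0] and [U'' = 0] are linear in [(L1, L2)] with the
    rotation matrix of angle [2 th] as coefficient matrix, so for every [th]
    they pin down a unique parameter point.  Written with [t = PI - th],
    that point is exactly the point of [Gamma1] with parameter [t]. *)
From Stdlib Require Import Reals Lra.
From Coquelicot Require Import Coquelicot.
Open Scope R_scope.

Lemma is_derive_Ubar L1 L2 th :
  is_derive (Ubar L1 L2) th (-2 * L1 * sin (2 * th) + 2 * L2 * cos (2 * th) + sin th).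
Proof. unfold Ubar; auto_derive; auto; ring. Qed.

Lemma Derive_Ubar L1 L2 th :
  Derive (Ubar L1 L2) th = -2 * L1 * sin (2 * th) + 2 * L2 * cos (2 * th) + sin th.
Proof. exact (is_derive_unique _ _ _ (is_derive_Ubar L1 L2 th)). Qed.

Lemma Derive_n_Ubar_2 L1 L2 th :
  Derive_n (Ubar L1 L2) 2 th = -4 * L1 * cos (2 * th) - 4 * L2 * sin (2 * th) + cos th.
Proof.
  simpl; rewrite (Derive_ext _ _ _ (Derive_Ubar L1 L2)).
  apply is_derive_unique; auto_derive; auto; ring.
Qed.

Lemma rotation_system_iff (c s a b L1 L2 : R) :
  c ^ 2 + s ^ 2 = 1 ->
  (-2 * L1 * s + 2 * L2 * c + a = 0 /\ -4 * L1 * c - 4 * L2 * s + b = 0)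
  <-> (L1 = c * b / 4 + s * a / 2 /\ L2 = s * b / 4 - c * a / 2).
Proof.
  intros Hcs; split.
  - intros [Ha Hb]; split.
    + replace L1 with (L1 * (c ^ 2 + s ^ 2)) by (rewrite Hcs; ring).
      replace b with (4 * (L1 * c + L2 * s)) by lra.
      replace a with (-2 * (L2 * c - L1 * s)) by lra.
      field.
    + replace L2 with (L2 * (c ^ 2 + s ^ 2)) by (rewrite Hcs; ring).
      replace b with (4 * (L1 * c + L2 * s)) by lra.
      replace a with (-2 * (L2 * c - L1 * s)) by lra.
      field.
  - intros [-> ->]; split.
    + transitivity (a * (1 - (c ^ 2 + s ^ 2))); [field | rewrite Hcs; ring].
    + transitivity (b * (1 - (c ^ 2 + s ^ 2))); [field | rewrite Hcs; ring].
Qed.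

Lemma degenerate_critical_point_iff L1 L2 th :
  (Derive (Ubar L1 L2) th = 0 /\ Derive_n (Ubar L1 L2) 2 th = 0)
  <-> (L1 = cos (2 * th) * cos th / 4 + sin (2 * th) * sin th / 2
       /\ L2 = sin (2 * th) * cos th / 4 - cos (2 * th) * sin th / 2).
Proof.
  rewrite Derive_Ubar, Derive_n_Ubar_2.
  apply rotation_system_iff.
  rewrite <- (sin2_cos2 (2 * th)); unfold Rsqr; ring.
Qed.

Lemma solution_at_PI_minus th :
  cos (2 * th) * cos th / 4 + sin (2 * th) * sin th / 2
    = cos (PI - th) ^ 3 / 2 - 3 * cos (PI - th) / 4
  /\ sin (2 * th) * cos th / 4 - cos (2 * th) * sin th / 2 = sin (PI - th) ^ 3 / 2.
Proof.
  rewrite cos_2a_sin, sin_2a, Rtrigo_facts.cos_pi_minus, sin_PI_x.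
  pose proof (sin2_cos2 th) as Hpyth; unfold Rsqr in Hpyth.
  split; apply Rminus_diag_uniq.
  - transitivity (cos th * (sin th * sin th + cos th * cos th - 1) / 2);
      [field | rewrite Hpyth; field].
  - transitivity (sin th * (sin th * sin th + cos th * cos th - 1) / 2);
      [field | rewrite Hpyth; field].
Qed.

Theorem mainTheorem1 (L1 L2 : R) :
  (exists th : R, Derive (Ubar L1 L2) th = 0 /\ Derive_n (Ubar L1 L2) 2 th = 0)
  <-> Gamma1 L1 L2.
Proof.
  split.
  - intros [th Hdeg]; exists (PI - th).
    destruct (solution_at_PI_minus th) as [<- <-].
    now apply degenerate_critical_point_iff.
  - intros [t Ht]; exists (PI - t).
    apply degenerate_critical_point_iff.
    destruct (solution_at_PI_minus (PI - t)) as [-> ->].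
    now replace (PI - (PI - t)) with t by ring.
Qed.
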